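(* Let $Y_1,\dots,Y_k\in\{0,1\}$ be independent unbiased Bernoulli random variables (each equal to $1$ with probability $1/2$), let $a_1,\dots,a_k\geq 0$ be reals, and let $X=\sum_{i=1}^k a_iY_i$ with mean $\mu=\mathbb{E}[X]$ and standard deviation $\sigma=\sqrt{\mathrm{Var}(X)}$. Then for every $c\in[0,1]$, $$\Pr(X\geq\mu+c\sigma)\geq\frac{(1-c)^2}{4}.$$ *)

(* the joint law of k independent unbiased Bernoulli
   variables is the uniform probability on the cube {0,1}^k. *)
From HB Require Import structures.
From mathcomp Require Import all_boot all_order all_algebra.
From mathcomp Require Import reals.
Set Implicit Arguments. Unset Strict Implicit. Unset Printing Implicit Defensive.
Import Order.TTheory GRing.Theory Num.Theory.
Local Open Scope ring_scope.

Definition cube (k : nat) := {ffun 'I_k -> bool}.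

Definition Pr {R : realType} (k : nat) (E : pred (cube k)) : R :=
  #|[set w : cube k | E w]|%:R / #|{: cube k}|%:R.

Definition Ex {R : realType} (k : nat) (Z : cube k -> R) : R :=
  (\sum_(w : cube k) Z w) / #|{: cube k}|%:R.

Definition Xsum {R : realType} (k : nat) (a : 'I_k -> R) (w : cube k) : R :=
  \sum_(i < k) a i * (w i)%:R.

Definition meanX {R : realType} (k : nat) (a : 'I_k -> R) : R := Ex (Xsum a).

Definition varX {R : realType} (k : nat) (a : 'I_k -> R) : R :=
  Ex (fun w => (Xsum a w - meanX a) ^+ 2).

Definition sdX {R : realType} (k : nat) (a : 'I_k -> R) : R := Num.sqrt (varX a).

From HB Require Import structures.
From mathcomp Require Import all_boot all_order all_algebra.
From mathcomp Require Import reals ring lra.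
Set Implicit Arguments. Unset Strict Implicit. Unset Printing Implicit Defensive.
Import Order.TTheory GRing.Theory Num.Theory.
Local Open Scope ring_scope.

(* Write Y_i = (1 + e_i) / 2 with independent uniform signs e_i. Then
   X = (sum a_i + Z) / 2 with Z = sum a_i e_i, so that mu = (sum a_i) / 2,
   sigma = |a| / 2, and the event X >= mu + c sigma is Z >= c |a|.  Conditioning on e_1 splits
   the event into Z' >= c g - a_1 and Z' >= c g + a_1, where g = |a| and Z' is
   the sum over the remaining weights, of norm s.  If c g <= a_1, the first of
   these has probability at least 1/2 because Z' is symmetric.  Otherwise both
   thresholds are rescaled to multiples of s and the induction hypothesis is
   applied to one or both of them; what remains is an elementary inequality
   between a_1, s, g = sqrt (a_1^2 + s^2) and c. *)

Definition cube_cons k (x : bool) (w : cube k) : cube k.+1 :=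
  [ffun i => if unlift ord0 i is Some j then w j else x].

Definition cube_neg k (w : cube k) : cube k := [ffun i => ~~ w i].

Lemma cube_cons0 k x (w : cube k) : cube_cons x w ord0 = x.
Proof. by rewrite ffunE unlift_none. Qed.

Lemma cube_consS k x (w : cube k) j : cube_cons x w (lift ord0 j) = w j.
Proof. by rewrite ffunE liftK. Qed.

Lemma cube_negK k : involutive (@cube_neg k).
Proof. by move=> w; apply/ffunP => i; rewrite !ffunE negbK. Qed.

Lemma card_cube k : #|{: cube k}| = (2 ^ k)%N.
Proof. by rewrite card_ffun card_bool card_ord. Qed.

Section RademacherSums.
Variable R : realFieldType.

Lemma sum_cubeS k (F : cube k.+1 -> R) :
  \sum_(w : cube k.+1) F w =
  \sum_(w : cube k) (F (cube_cons true w) + F (cube_cons false w)).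
Proof.
pose h (p : bool * cube k) := cube_cons p.1 p.2.
pose g (w : cube k.+1) := (w ord0, [ffun j => w (lift ord0 j)] : cube k).
have hK : cancel g h.
  move=> w; apply/ffunP => i; rewrite ffunE.
  by case: unliftP => [j ->|->]; rewrite ?ffunE.
have gK : cancel h g.
  move=> [x w]; rewrite /g /h /= cube_cons0; congr pair.
  by apply/ffunP => j; rewrite ffunE cube_consS.
rewrite (reindex h); last by exists g => ? _.
rewrite -(pair_big xpredT xpredT (fun x w => F (cube_cons x w))) /= big_bool.
by rewrite -big_split.
Qed.

Lemma sum_cube_neg k (F : cube k -> R) :
  \sum_(w : cube k) F (cube_neg w) = \sum_(w : cube k) F w.
Proof. by rewrite [RHS](reindex_inj (inv_inj (@cube_negK k))). Qed.

Lemma sum_cube_const k (x : R) : \sum_(w : cube k) x = 2 ^+ k * x.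
Proof. by rewrite sumr_const card_cube -(mulr_natl x (2 ^ k)) natrX. Qed.

Definition sign (x : bool) : R := if x then 1 else -1.

Definition rsum k (b : 'I_k -> R) (w : cube k) : R :=
  \sum_(i < k) b i * sign (w i).

Definition sqnorm k (b : 'I_k -> R) : R := \sum_(i < k) b i ^+ 2.

Definition upper_count k (b : 'I_k -> R) (t : R) : R :=
  \sum_(w : cube k) (t <= rsum b w)%R%:R.

Definition ftail k (b : 'I_k.+1 -> R) : 'I_k -> R := fun j => b (lift ord0 j).

Lemma rsum_ord0 (b : 'I_0 -> R) w : rsum b w = 0.
Proof. by rewrite /rsum big_ord0. Qed.

Lemma rsum_cons k (b : 'I_k.+1 -> R) x w :
  rsum b (cube_cons x w) = b ord0 * sign x + rsum (ftail b) w.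
Proof.
rewrite /rsum big_ord_recl cube_cons0; congr (_ + _).
by apply: eq_bigr => j _; rewrite cube_consS.
Qed.

Lemma rsum_neg k (b : 'I_k -> R) w : rsum b (cube_neg w) = - rsum b w.
Proof.
rewrite /rsum -sumrN; apply: eq_bigr => i _.
by rewrite ffunE /sign; case: (w i) => /=; rewrite ?mulrN ?opprK.
Qed.

Lemma sqnormS k (b : 'I_k.+1 -> R) : sqnorm b = b ord0 ^+ 2 + sqnorm (ftail b).
Proof. by rewrite /sqnorm big_ord_recl. Qed.

Lemma sqnorm_ge0 k (b : 'I_k -> R) : 0 <= sqnorm b.
Proof. by apply: sumr_ge0 => i _; apply: sqr_ge0. Qed.

Lemma sum_rsum k (b : 'I_k -> R) : \sum_(w : cube k) rsum b w = 0.
Proof.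
apply/eqP; rewrite -[_ == 0](mulrn_eq0 _ 2) mulr2n.
by rewrite -{1}sum_cube_neg -big_split /=; apply/eqP/big1 => w _;
  rewrite rsum_neg addNr.
Qed.

Lemma sum_rsum_sqr k (b : 'I_k -> R) :
  \sum_(w : cube k) rsum b w ^+ 2 = 2 ^+ k * sqnorm b.
Proof.
elim: k b => [|k IH] b.
  by rewrite big1 /sqnorm ?big_ord0 ?mulr0 // => w _; rewrite rsum_ord0 expr0n.
rewrite sum_cubeS (eq_bigr (fun w => 2 * b ord0 ^+ 2 + 2 * rsum (ftail b) w ^+ 2)).
  by rewrite big_split /= sum_cube_const -mulr_sumr IH sqnormS (exprS 2 k); ring.
by move=> w _; rewrite !rsum_cons /sign; ring.
Qed.

Lemma upper_countS k (b : 'I_k.+1 -> R) t :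
  upper_count b t =
  upper_count (ftail b) (t - b ord0) + upper_count (ftail b) (t + b ord0).
Proof.
rewrite /upper_count sum_cubeS -big_split; apply: eq_bigr => w _ /=.
by rewrite !rsum_cons /sign mulr1 mulrN1 !(addrC _ (rsum _ w)) lerBrDr -lerBlDr.
Qed.

Lemma upper_count_ge0 k (b : 'I_k -> R) t : 0 <= upper_count b t.
Proof. exact: sumr_ge0. Qed.

Lemma le_upper_count k (b : 'I_k -> R) t1 t2 :
  t1 <= t2 -> upper_count b t2 <= upper_count b t1.
Proof.
move=> le12; apply: ler_sum => w _; rewrite ler_nat.
by case E: (t2 <= _)%O => //; rewrite (le_trans le12 E).
Qed.

(* The sign flip of the cube negates a Rademacher sum, so [0] is a median. *)
Lemma upper_count0_ge k (b : 'I_k -> R) : 2 ^+ k <= 2 * upper_count b 0.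
Proof.
rewrite mulr2n mulrDl mul1r {1}/upper_count -sum_cube_neg -big_split /=.
rewrite -[2 ^+ k]mulr1 -sum_cube_const; apply: ler_sum => w _.
rewrite rsum_neg oppr_ge0 -natrD ler1n.
by case: (lerP (rsum b w) 0) => // /ltW ->.
Qed.

Lemma upper_count_nonpos_ge k (b : 'I_k -> R) t :
  t <= 0 -> 2 ^+ k <= 2 * upper_count b t.
Proof.
move=> t_le0; apply: le_trans (upper_count0_ge b) _.
by apply: ler_wpM2l => //; apply: le_upper_count.
Qed.

End RademacherSums.

Section Inequalities.
Variable R : realFieldType.

Lemma concave_quadratic_ge0 (A B C q x : R) :
  A <= 0 -> 0 <= x -> x <= q -> 0 <= C -> 0 <= A * q ^+ 2 + B * q + C ->
  0 <= A * x ^+ 2 + B * x + C.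
Proof.
move=> A_le0 x_ge0 xq C_ge0 fq_ge0.
have [q0|q_gt0] := eqVneq q 0.
  suff -> : x = q by [].
  by apply/le_anti; rewrite xq q0 x_ge0.
have {q_gt0} q_gt0 : 0 < q by rewrite lt_def q_gt0 (le_trans x_ge0 xq).
rewrite -(pmulr_rge0 _ q_gt0).
have -> : q * (A * x ^+ 2 + B * x + C) =
  (q - x) * C + x * (A * q ^+ 2 + B * q + C) - A * q * x * (q - x) by ring.
have qx_ge0 : 0 <= q - x by rewrite subr_ge0.
have : 0 <= - A * q * x * (q - x).
  by rewrite !mulr_ge0 // ?oppr_ge0 // ltW.
have : 0 <= (q - x) * C + x * (A * q ^+ 2 + B * q + C).
  by rewrite addr_ge0 ?mulr_ge0.
lra.
Qed.

Lemma shift_bound_two_sided (b s g c : R) :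
  g ^+ 2 = b ^+ 2 + s ^+ 2 -> 0 <= c ->
  2 * (1 - c) ^+ 2 * s ^+ 2 <= (s - c * g + b) ^+ 2 + (s - c * g - b) ^+ 2.
Proof.
move=> g_sqr c_ge0; rewrite -subr_ge0.
have -> : (s - c * g + b) ^+ 2 + (s - c * g - b) ^+ 2 - 2 * (1 - c) ^+ 2 * s ^+ 2 =
  2 * (b ^+ 2 * (1 - c + c ^+ 2) + c * (g - s) ^+ 2)
  + 2 * (c ^+ 2 - c) * (g ^+ 2 - b ^+ 2 - s ^+ 2) by ring.
have -> : g ^+ 2 - b ^+ 2 - s ^+ 2 = 0 by rewrite g_sqr; ring.
rewrite mulr0 addr0.
have : 0 <= 1 - c + c ^+ 2 by nra.
have : 0 <= c * (g - s) ^+ 2 by rewrite mulr_ge0 ?sqr_ge0.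
nra.
Qed.

(* Any constant below sqrt 2 would do: shift_bound_one_sided needs
   2 (s (g + b - s))^2 <= 4 (b g)^2. *)
Lemma hypot_excess_le (b s g : R) :
  0 <= b -> 0 <= s -> 0 <= g -> g ^+ 2 = b ^+ 2 + s ^+ 2 ->
  s * (g + b - s) <= 5 / 4 * (b * g).
Proof.
move=> b_ge0 s_ge0 g_ge0 g_sqr.
have gs_b : (g - s) * (g + s) = b ^+ 2 by rewrite -[LHS]subr_sqr g_sqr; ring.
have [s0|s_gt0] := eqVneq s 0.
  by rewrite s0 mul0r; have := mulr_ge0 b_ge0 g_ge0; lra.
have gs_gt0 : 0 < g + s by rewrite ltr_wpDl // lt_def s_gt0.
rewrite -(ler_pM2r gs_gt0).
have -> : s * (g + b - s) * (g + s) = b * (s * (g + s)) + s * ((g - s) * (g + s)).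
  by ring.
rewrite gs_b.
have sg_ge0 : 0 <= s * g := mulr_ge0 s_ge0 g_ge0.
have : s * (g + s) + s * b <= 5 / 4 * g * (g + s).
  rewrite -subr_ge0.
  have -> : 5 / 4 * g * (g + s) - (s * (g + s) + s * b) =
    5 / 4 * (g ^+ 2 - b ^+ 2 - s ^+ 2) + (s / 2 - b) ^+ 2 + (b ^+ 2 + s * g) / 4.
    by field.
  have -> : g ^+ 2 - b ^+ 2 - s ^+ 2 = 0 by rewrite g_sqr; ring.
  by rewrite mulr0 add0r addr_ge0 ?sqr_ge0 // divr_ge0 ?ler0n ?addr_ge0 ?sqr_ge0.
nra.
Qed.

Lemma shift_bound_one_sided (b s g c : R) :
  0 <= b -> 0 < s -> 0 <= g -> g ^+ 2 = b ^+ 2 + s ^+ 2 -> c <= 1 ->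
  s < c * g + b -> 2 * (1 - c) ^+ 2 * s ^+ 2 <= (s - c * g + b) ^+ 2.
Proof.
move=> b_ge0 s_gt0 g_ge0 g_sqr c_le1 s_lt.
set d := 1 - c; set h := s + b - g; set q := g + b - s.
have d_ge0 : 0 <= d by rewrite subr_ge0.
have s_le_g : s <= g by nra.
have h_ge0 : 0 <= h by rewrite subr_ge0; nra.
have dg_ge0 : 0 <= d * g := mulr_ge0 d_ge0 g_ge0.
have -> : s - c * g + b = h + d * g by rewrite /h /d; ring.
have [g_big|g_small] := lerP (2 * s ^+ 2) (g ^+ 2).
  have : 2 * d ^+ 2 * s ^+ 2 <= (d * g) ^+ 2.
    have : 0 <= d ^+ 2 * (g ^+ 2 - 2 * s ^+ 2) by rewrite mulr_ge0 ?sqr_ge0 ?subr_ge0.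
    rewrite exprMn; lra.
  have : (d * g) ^+ 2 <= (h + d * g) ^+ 2 by nra.
  lra.
(* Now x |-> g^2 (h + x)^2 - 2 s^2 x^2 is concave, nonnegative at x = 0 and at
   x = q, and d g lies in [0, q]. *)
have g_gt0 : 0 < g by lra.
rewrite -subr_ge0 -(pmulr_rge0 _ (exprn_gt0 2 g_gt0)).
have -> : g ^+ 2 * ((h + d * g) ^+ 2 - 2 * d ^+ 2 * s ^+ 2) =
  (g ^+ 2 - 2 * s ^+ 2) * (d * g) ^+ 2 + 2 * h * g ^+ 2 * (d * g) + g ^+ 2 * h ^+ 2
  by ring.
apply: (concave_quadratic_ge0 (q := q)) => //.
- by rewrite subr_le0 ltW.
- by rewrite /d /q; lra.
- by rewrite mulr_ge0 ?sqr_ge0.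
- have sq_le := hypot_excess_le b_ge0 (ltW s_gt0) g_ge0 g_sqr.
  have q_ge0 : 0 <= q by rewrite /q; lra.
  have sq_ge0 : 0 <= s * q := mulr_ge0 (ltW s_gt0) q_ge0.
  have bg_ge0 : 0 <= b * g := mulr_ge0 b_ge0 g_ge0.
  have -> : (g ^+ 2 - 2 * s ^+ 2) * q ^+ 2 + 2 * h * g ^+ 2 * q + g ^+ 2 * h ^+ 2 =
    4 * (b * g) ^+ 2 - 2 * (s * q) ^+ 2 by rewrite /h /q; ring.
  have : 0 <= (5 / 4 * (b * g) - s * q) * (5 / 4 * (b * g) + s * q).
    by rewrite mulr_ge0 ?subr_ge0 //; lra.
  nra.
Qed.

End Inequalities.

Section TailBound.
Variable R : rcfType.

Definition tail_bound k (b : 'I_k -> R) := forall c, 0 <= c -> c <= 1 ->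
  (1 - c) ^+ 2 * 2 ^+ k <= 4 * upper_count b (c * Num.sqrt (sqnorm b)).

Lemma tail_bound_scaled k (b : 'I_k -> R) t : tail_bound b ->
  0 <= t -> t <= Num.sqrt (sqnorm b) ->
  (Num.sqrt (sqnorm b) - t) ^+ 2 * 2 ^+ k <= 4 * sqnorm b * upper_count b t.
Proof.
move=> bound t_ge0 t_le; set s := Num.sqrt (sqnorm b).
have -> : sqnorm b = s ^+ 2 by rewrite sqr_sqrtr // sqnorm_ge0.
have [s0|s_neq0] := eqVneq s 0.
  have t0 : t = 0 by apply/le_anti; rewrite t_ge0 andbT -s0.
  rewrite s0 t0 subrr expr0n /= mul0r.
  by rewrite !mulr_ge0 ?upper_count_ge0.
have s_gt0 : 0 < s by rewrite lt_def s_neq0 sqrtr_ge0.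
have := bound (t / s) (divr_ge0 t_ge0 (ltW s_gt0)).
rewrite ler_pdivrMr // mul1r divfK // => /(_ t_le) le_count.
have -> : (s - t) ^+ 2 * 2 ^+ k = s ^+ 2 * ((1 - t / s) ^+ 2 * 2 ^+ k) by field.
have := ler_wpM2l (sqr_ge0 s) le_count; lra.
Qed.

Lemma tail_boundS k (b : 'I_k.+1 -> R) :
  (forall i, 0 <= b i) -> tail_bound (ftail b) -> tail_bound b.
Proof.
move=> b_ge0 bound c c_ge0 c_le1.
set b0 := b ord0; set s := Num.sqrt (sqnorm (ftail b)).
set g := Num.sqrt (sqnorm b); set t := c * g.
have b0_ge0 : 0 <= b0 := b_ge0 ord0.
have s_ge0 : 0 <= s := sqrtr_ge0 _.
have g_ge0 : 0 <= g := sqrtr_ge0 _.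
have s_sqr : sqnorm (ftail b) = s ^+ 2 by rewrite sqr_sqrtr // sqnorm_ge0.
have g_sqr : g ^+ 2 = b0 ^+ 2 + s ^+ 2.
  by rewrite sqr_sqrtr ?sqnorm_ge0 // sqnormS s_sqr.
have N2_ge0 := upper_count_ge0 (ftail b) (t + b0).
rewrite upper_countS -/b0 (exprS 2 k).
have [t_le_b0|b0_lt_t] := lerP t b0.
  have := upper_count_nonpos_ge (ftail b) (_ : t - b0 <= 0).
  rewrite subr_le0 => /(_ t_le_b0).
  have c_sqr_le1 : (1 - c) ^+ 2 <= 1 by nra.
  have := ler_piMl (exprn_ge0 k (ler0n R 2)) c_sqr_le1.
  lra.
have g_le : g <= b0 + s by nra.
have t_le : t <= b0 + s by rewrite /t; nra.
have s_gt0 : 0 < s.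
  rewrite lt_def s_ge0 andbT; apply: contraTneq b0_lt_t => s0.
  by rewrite -leNgt /t; nra.
have := tail_bound_scaled bound (_ : 0 <= t - b0).
rewrite -/s subr_ge0 lerBlDl s_sqr => /(_ (ltW b0_lt_t) t_le).
have -> : s - (t - b0) = s - c * g + b0 by rewrite /t; ring.
move=> N1.
rewrite -(ler_pM2l (exprn_gt0 2 s_gt0)).
have [t_le_s|s_lt] := lerP (t + b0) s.
  have := tail_bound_scaled bound (_ : 0 <= t + b0).
  rewrite -/s s_sqr => /(_ _ t_le_s).
  have -> : s - (t + b0) = s - c * g - b0 by rewrite /t; ring.
  move=> N2.
  move/(ler_wpM2r (exprn_ge0 k (ler0n R 2))): (shift_bound_two_sided g_sqr c_ge0).
  lra.
move/(ler_wpM2r (exprn_ge0 k (ler0n R 2))):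
  (shift_bound_one_sided b0_ge0 s_gt0 g_ge0 g_sqr c_le1 s_lt).
have : 0 <= s ^+ 2 * upper_count (ftail b) (t + b0) by rewrite mulr_ge0 ?sqr_ge0.
lra.
Qed.

Lemma tail_bound_nonneg k (b : 'I_k -> R) : (forall i, 0 <= b i) -> tail_bound b.
Proof.
elim: k b => [|k IH] b b_ge0.
  move=> c c_ge0 c_le1; rewrite /sqnorm big_ord0 sqrtr0 mulr0 expr0 mulr1.
  rewrite /upper_count (eq_bigr (fun=> 1)) => [|w _]; last by rewrite rsum_ord0 lexx.
  rewrite sum_cube_const expr0 mulr1; nra.
by apply: tail_boundS => //; apply: IH => i; apply: b_ge0.
Qed.

End TailBound.

Section BernoulliSums.
Variables (R : realType) (k : nat) (a : 'I_k -> R).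

Lemma card_cubeR : #|{: cube k}|%:R = 2 ^+ k :> R.
Proof. by rewrite card_cube natrX. Qed.

Lemma Xsum_rsum w : Xsum a w = (\sum_(i < k) a i + rsum a w) / 2.
Proof.
rewrite /Xsum /rsum -big_split mulr_suml; apply: eq_bigr => i _ /=.
by rewrite /sign; case: (w i) => /=; field.
Qed.

Lemma meanX_sum : meanX a = (\sum_(i < k) a i) / 2.
Proof.
rewrite /meanX /Ex (eq_bigr _ (fun w _ => Xsum_rsum w)) -mulr_suml big_split /=.
rewrite sum_rsum addr0 sum_cube_const card_cubeR; field.
by rewrite expf_neq0 ?pnatr_eq0.
Qed.

Lemma varX_sqnorm : varX a = sqnorm a / 4.
Proof.
rewrite /varX /Ex meanX_sum (eq_bigr (fun w => rsum a w ^+ 2 / 4)) => [|w _].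
  rewrite -mulr_suml sum_rsum_sqr card_cubeR; field.
  by rewrite expf_neq0 ?pnatr_eq0.
by rewrite Xsum_rsum; field.
Qed.

Lemma sdX_sqnorm : sdX a = Num.sqrt (sqnorm a) / 2.
Proof.
rewrite /sdX varX_sqnorm.
have -> : sqnorm a / 4 = (Num.sqrt (sqnorm a) / 2) ^+ 2.
  by rewrite expr_div_n sqr_sqrtr ?sqnorm_ge0 //; field.
by rewrite sqrtr_sqr ger0_norm // divr_ge0 ?sqrtr_ge0.
Qed.

Lemma Pr_Xsum_ge t :
  Pr [pred w | meanX a + t / 2 <= Xsum a w] = upper_count a t / 2 ^+ k.
Proof.
rewrite /Pr card_cubeR; congr (_ / _).
rewrite -sum1_card natr_sum big_mkcond /=; apply: eq_bigr => w _.
rewrite inE /= meanX_sum Xsum_rsum -mulrDl ler_pM2r ?invr_gt0 // lerD2l.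
by case: (_ <= _)%O.
Qed.

End BernoulliSums.

Theorem claim8p4 (R : realType) (k : nat) (a : 'I_k -> R)
  (ha : forall i, 0 <= a i) (c : R) (hc0 : 0 <= c) (hc1 : c <= 1) :
  (1 - c) ^+ 2 / 4 <= Pr [pred w | meanX a + c * sdX a <= Xsum a w].
Proof.
rewrite sdX_sqnorm mulrA Pr_Xsum_ge ler_pdivlMr ?exprn_gt0 //.
have := tail_bound_nonneg ha hc0 hc1.
lra.
Qed.
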